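(* For every integer $k>2$, $\mathcal{U}_k^m(\mathfrak{N})=\mathbb{N}_{\ge 2}$.
   Context: $\mathbb{N}$ denotes the non-negative integers and $\mathbb{N}_{\ge2}$ the set of integers greater than one. A numerical semigroup is a submonoid of $(\mathbb{N},+)$ with finite complement; $\mathfrak{N}$ denotes the set of all numerical semigroups (a monoid under intersection). A numerical semigroup is irreducible if it cannot be written as the intersection of two numerical semigroups properly containing it. Given a numerical semigroup $S$ and irreducible numerical semigroups $S_1,\dots,S_n$, the expression $S_1\cap\dots\cap S_n$ is a factorization of $S$ (of length $n$) if $S=S_1\cap\dots\cap S_n$ and $S\neq\bigcap_{j\in J}S_j$ for every nonempty proper subset $J\subsetneq\{1,\dots,n\}$. For a positive integer $k$, $\mathcal{U}_k^m(\mathfrak{N})$ is the set of positive integers $l$ such that there exists a numerical semigroup having a factorization of length $k$ and a factorization of length $l$. *)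

From Stdlib Require Import Arith.

Definition set_eq (A B : nat -> Prop) : Prop := forall x, A x <-> B x.
Definition subset (A B : nat -> Prop) : Prop := forall x, A x -> B x.

Definition numerical_semigroup (S : nat -> Prop) : Prop :=
  S 0 /\
  (forall a b, S a -> S b -> S (a + b)) /\
  (exists N, forall n, N <= n -> S n).

Definition irreducible (S : nat -> Prop) : Prop :=
  numerical_semigroup S /\
  ~ (exists T1 T2 : nat -> Prop,
        numerical_semigroup T1 /\ numerical_semigroup T2 /\
        subset S T1 /\ ~ subset T1 S /\
        subset S T2 /\ ~ subset T2 S /\
        set_eq S (fun x => T1 x /\ T2 x)).

Definition sub_inter (n : nat) (F : nat -> nat -> Prop) (J : nat -> bool)
  : nat -> Prop :=
  fun x => forall i, i < n -> J i = true -> F i x.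

Definition is_factorization (S : nat -> Prop) (n : nat)
  (F : nat -> nat -> Prop) : Prop :=
  (forall i, i < n -> irreducible (F i)) /\
  set_eq S (sub_inter n F (fun _ => true)) /\
  (forall J : nat -> bool,
      (exists i, i < n /\ J i = true) ->
      (exists i, i < n /\ J i = false) ->
      ~ set_eq S (sub_inter n F J)).

Definition has_factorization_of_length (S : nat -> Prop) (n : nat) : Prop :=
  exists F, is_factorization S n F.

Definition U_m (k : nat) (l : nat) : Prop :=
  0 < l /\
  exists S, numerical_semigroup S /\
    has_factorization_of_length S k /\ has_factorization_of_length S l.

(* For l = 1: a factorization of length 1 exhibits S as an irreducible numerical semigroup,
   while a factorization S = S_1 ∩ ... ∩ S_k with k >= 2 writes S as S_1 ∩ (S_2 ∩ ... ∩ S_k),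
   two numerical semigroups properly containing S, so k > 2 excludes l = 1.
   For l >= 2 take p = k + l and S_p = {0} ∪ {x >= 2p+1 | x even or x >= 4p+2}.  For every
   2 <= L <= p+1, S_p is the intersection of the L irreducible semigroups
   {0} ∪ [2p+1, ∞) \ {4p+1},  2N ∪ [2(2p+2-L)+1, ∞)  and  {0} ∪ [c, ∞) \ {2c-1} for
   c = 2p+1-L+i, 2 <= i < L; the Frobenius number of each factor lies in all the other
   factors but not in S_p, so no factor can be dropped. *)
From Stdlib Require Import Arith Lia Classical.

Section FrobeniusCriterion.

Variables (T : nat -> Prop) (frob : nat).
Hypothesis T_ns : numerical_semigroup T.
Hypothesis frob_gap : ~ T frob.
Hypothesis gap_forces_frob :
  forall y, ~ T y -> y = frob \/ (y < frob /\ T (frob - y)) \/ y + y = frob.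

Lemma oversemigroup_contains_frob (U : nat -> Prop) :
  numerical_semigroup U -> subset T U -> ~ subset U T -> U frob.
Proof.
  intros [_ [U_add _]] TU UnT. apply NNPP. intros Ufrob. apply UnT.
  intros y Uy. apply NNPP. intros Ty.
  destruct (gap_forces_frob y Ty) as [-> | [[lt_y Tdiff] | double_y]].
  - exact (Ufrob Uy).
  - apply Ufrob. replace frob with (y + (frob - y)) by lia. auto.
  - apply Ufrob. rewrite <- double_y. auto.
Qed.

Lemma irreducible_of_frob : irreducible T.
Proof.
  split; [exact T_ns |].
  intros [T1 [T2 [ns1 [ns2 [sub1 [nsub1 [sub2 [nsub2 T_eq]]]]]]]].
  apply frob_gap, T_eq.
  split; apply oversemigroup_contains_frob; assumption.
Qed.

End FrobeniusCriterion.

Lemma sub_inter_eventually n F :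
  (forall i, i < n -> exists N, forall x, N <= x -> F i x) ->
  exists N, forall x, N <= x -> forall i, i < n -> F i x.
Proof.
  induction n as [|n IH]; intros bounds.
  - exists 0. intros. lia.
  - destruct IH as [N1 HN1]; [intros i Hi; apply bounds; lia |].
    destruct (bounds n (Nat.lt_succ_diag_r n)) as [N2 HN2].
    exists (N1 + N2). intros x Hx i Hi.
    destruct (Nat.eq_dec i n) as [-> | i_ne]; [apply HN2 | apply HN1]; lia.
Qed.

Lemma numerical_semigroup_sub_inter n F J :
  (forall i, i < n -> numerical_semigroup (F i)) ->
  numerical_semigroup (sub_inter n F J).
Proof.
  intros ns. split; [| split].
  - intros i Hi _. apply (ns i Hi).
  - intros a b Ha Hb i Hi HJ. apply (ns i Hi); auto.
  - destruct (sub_inter_eventually n F) as [N HN]; [intros i Hi; apply (ns i Hi) |].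
    exists N. intros x Hx i Hi _. auto.
Qed.

Lemma factorization_reducible S k F :
  2 <= k -> is_factorization S k F ->
  forall T, set_eq S T -> ~ irreducible T.
Proof.
  intros Hk [F_irr [S_eq S_min]] T ST [_ T_irr].
  set (J0 := fun i => i =? 0).
  set (Jrest := fun i => negb (i =? 0)).
  assert (S_F : forall x, S x -> forall i, i < k -> F i x)
    by (intros x Sx i Hi; apply (S_eq x); auto).
  assert (proper : forall J, (exists i, i < k /\ J i = true) ->
                            (exists i, i < k /\ J i = false) ->
                            ~ subset (sub_inter k F J) T).
  { intros J some none sub. apply (S_min J some none).
    intros x. split.
    - intros Sx i Hi _. auto.
    - intros Jx. apply ST, sub, Jx. }
  apply T_irr. exists (sub_inter k F J0), (sub_inter k F Jrest).
  assert (F_ns : forall i, i < k -> numerical_semigroup (F i))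
    by (intros i Hi; apply (F_irr i Hi)).
  assert (T_sub : forall J, subset T (sub_inter k F J))
    by (intros J x Tx i Hi _; apply S_F; [apply ST |]; auto).
  split; [apply numerical_semigroup_sub_inter; exact F_ns |].
  split; [apply numerical_semigroup_sub_inter; exact F_ns |].
  split; [apply T_sub |].
  split; [apply proper; [exists 0 | exists 1]; split; auto; lia |].
  split; [apply T_sub |].
  split; [apply proper; [exists 1 | exists 0]; split; auto; lia |].
  intros x. split.
  - intros Tx. split; apply T_sub, Tx.
  - intros [Jx Rx]. apply ST, (S_eq x). intros i Hi _.
    destruct i as [|i]; [apply Jx | apply Rx]; auto.
Qed.

Lemma no_factorization_length1 S k F :
  2 <= k -> is_factorization S k F -> ~ has_factorization_of_length S 1.
Proof.
  intros Hk HF [G [G_irr [S_eq _]]].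
  apply (factorization_reducible S k F Hk HF (G 0)); [| apply G_irr; lia].
  intros x. rewrite (S_eq x). split.
  - intros HG. apply HG; auto.
  - intros G0x i Hi _. replace i with 0 by lia. exact G0x.
Qed.

Lemma factorization_of_private_gaps S n F :
  (forall i, i < n -> irreducible (F i)) ->
  set_eq S (sub_inter n F (fun _ => true)) ->
  (forall i, i < n -> exists g, ~ S g /\ forall j, j < n -> j <> i -> F j g) ->
  is_factorization S n F.
Proof.
  intros F_irr S_eq private. split; [exact F_irr | split; [exact S_eq |]].
  intros J _ [i [Hi Ji]] SJ.
  destruct (private i Hi) as [g [Sg Fg]].
  apply Sg, SJ. intros j Hj Jj. apply Fg; [exact Hj |].
  intros ->. congruence.
Qed.

Definition interval_but_frob (c x : nat) : Prop := x = 0 \/ (c <= x /\ x <> 2 * c - 1).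

Definition evens_or_above (n x : nat) : Prop := (exists m, x = 2 * m) \/ 2 * n + 1 <= x.

Definition witness (p x : nat) : Prop :=
  x = 0 \/ (2 * p + 1 <= x /\ ((exists m, x = 2 * m) \/ 2 * (2 * p + 1) <= x)).

Definition witness_factor (p L i : nat) : nat -> Prop :=
  match i with
  | 0 => interval_but_frob (2 * p + 1)
  | 1 => evens_or_above (2 * p + 2 - L)
  | _ => interval_but_frob (2 * p + 1 - L + i)
  end.

Lemma witness_factor_ge2 p L i :
  2 <= i -> witness_factor p L i = interval_but_frob (2 * p + 1 - L + i).
Proof. intros Hi. destruct i as [|[|i]]; [lia | lia | reflexivity]. Qed.

Lemma interval_but_frob_irreducible c : 1 <= c -> irreducible (interval_but_frob c).
Proof.
  intros Hc. unfold interval_but_frob.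
  apply (irreducible_of_frob _ (2 * c - 1)).
  - split; [left; reflexivity | split].
    + intros a b [-> | Ha] [-> | Hb]; lia.
    + exists (2 * c). intros. lia.
  - lia.
  - intros y Hy. destruct (Nat.eq_dec y (2 * c - 1)); [now left |]. right; left. lia.
Qed.

Lemma evens_or_above_irreducible n : 1 <= n -> irreducible (evens_or_above n).
Proof.
  intros Hn. unfold evens_or_above.
  apply (irreducible_of_frob _ (2 * n - 1)).
  - split; [left; exists 0; reflexivity | split].
    + intros a b [[i ->] | Ha] [[j ->] | Hb]; try (right; lia).
      left. exists (i + j). lia.
    + exists (2 * n + 1). intros. now right.
  - intros [[m Hm] | H]; lia.
  - intros y Hy. destruct (Nat.eq_dec y (2 * n - 1)); [now left |]. right; left.
    destruct (Nat.Even_or_Odd y) as [[m Hm] | [m Hm]].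
    + exfalso. apply Hy. left. now exists m.
    + split; [lia |]. left. exists (n - 1 - m). lia.
Qed.

Lemma witness_numerical_semigroup p : numerical_semigroup (witness p).
Proof.
  unfold witness. split; [left; reflexivity | split].
  - intros a b [-> | [Ha Ha']] [-> | [Hb Hb']].
    + now left.
    + now right.
    + right. rewrite Nat.add_0_r. auto.
    + right. split; [lia |]. right. lia.
  - exists (2 * (2 * p + 1)). intros. right. split; [lia | now right].
Qed.

Section WitnessFactorization.

Variables p L : nat.
Hypotheses (p_pos : 1 <= p) (L_ge2 : 2 <= L) (L_le : L <= p + 1).

Lemma witness_factor_irreducible i : i < L -> irreducible (witness_factor p L i).
Proof.
  intros Hi. destruct i as [|[|i]].
  - apply interval_but_frob_irreducible. lia.
  - apply evens_or_above_irreducible. lia.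
  - apply interval_but_frob_irreducible. lia.
Qed.

Lemma witness_eq_inter : set_eq (witness p) (sub_inter L (witness_factor p L) (fun _ => true)).
Proof.
  intros x. split.
  - intros Wx i Hi _.
    destruct Wx as [-> | [x_ge [[m ->] | x_large]]];
      destruct i as [|[|i]]; simpl; unfold interval_but_frob, evens_or_above;
      solve [lia | left; eexists; reflexivity | left; exists 0; reflexivity].
  - intros Fx. unfold witness.
    destruct (Fx 0 ltac:(lia) eq_refl) as [-> | [x_ge x_ne]]; [now left |].
    right. split; [exact x_ge |].
    destruct (Nat.Even_or_Odd x) as [[m Hm] | [m Hm]]; [left; now exists m |].
    destruct (le_lt_dec (2 * (2 * p + 1)) x) as [Hle | Hlt]; [now right |].
    exfalso.
    destruct (Fx 1 ltac:(lia) eq_refl) as [[m' Hm'] | x_above]; [lia |].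
    (* x = 2m+1 is the Frobenius number of the factor with index m + L - 2p *)
    pose proof (Fx (m + L - 2 * p) ltac:(lia) eq_refl) as Fm.
    rewrite witness_factor_ge2 in Fm by lia. unfold interval_but_frob in Fm. lia.
Qed.

Lemma witness_private_gaps i :
  i < L -> exists g, ~ witness p g /\ forall j, j < L -> j <> i -> witness_factor p L j g.
Proof.
  intros Hi. unfold witness.
  destruct i as [|[|i]]; [exists (2 * p) | exists (2 * (2 * p + 2 - L) - 1)
                          | exists (2 * (2 * p + 1 - L + S (S i)) - 1)];
    (split; [intros [H | [H [[m Hm] | H']]]; lia |]);
    intros j Hj Hne; destruct j as [|[|j]]; simpl;
    unfold interval_but_frob, evens_or_above; try lia.
  left. now exists p.
Qed.

Lemma witness_factorization : is_factorization (witness p) L (witness_factor p L).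
Proof.
  apply factorization_of_private_gaps.
  - exact witness_factor_irreducible.
  - exact witness_eq_inter.
  - exact witness_private_gaps.
Qed.

End WitnessFactorization.

Theorem theorem2p5 : forall k : nat, 2 < k -> forall l : nat, U_m k l <-> 2 <= l.
Proof.
  intros k Hk l. split.
  - intros [l_pos [S [_ [[F HF] Hl]]]].
    destruct (Nat.eq_dec l 1) as [-> | l_ne1]; [| lia].
    exfalso. exact (no_factorization_length1 S k F ltac:(lia) HF Hl).
  - intros Hl. split; [lia |]. exists (witness (k + l)).
    split; [apply witness_numerical_semigroup |].
    split; eexists; apply witness_factorization; lia.
Qed.
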